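(* Let $G=([n],E)$ be an oriented graph with $|\mathcal{P}(G)|\ge 1$ and associated poset $P=([n],\le_G)$. If $\dim P\ge 3$, then \[\max_{\sigma,\rho\in\mathcal{P}(G)} d_K(\sigma,\rho)<|I(P)|.\]
   Context: Write a permutation $\sigma\in S_n$ as $\sigma=\sigma_1\cdots\sigma_n$. A permutation $\sigma$ satisfies an oriented graph $G=([n],E)$ if $\sigma_u>\sigma_v$ for every oriented edge $u\to v\in E$; $\mathcal{P}(G)$ is the set of permutations satisfying $G$. Write $u\rightsquigarrow v$ if there is an oriented path from $u$ to $v$ in $G$. The poset $P=([n],\le_G)$ is defined by $a\le_G b$ iff $a\rightsquigarrow b$ or $a=b$. The dimension $\dim P$ is the smallest number of total orders on $[n]$ whose intersection is $\le_G$. $I(P)=\{(i,j): i<j,\ i\not\rightsquigarrow j,\ j\not\rightsquigarrow i\}$. For $\sigma,\rho\in S_n$, a pair $i<j$ is discordant if $(\sigma_i-\sigma_j)(\rho_i-\rho_j)<0$; $d_K(\sigma,\rho)$ is the number of discordant pairs. *)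

From mathcomp Require Import all_boot all_order all_fingroup.
Set Implicit Arguments. Unset Strict Implicit. Unset Printing Implicit Defensive.

(* Vertex set [n] is represented by 'I_n; a permutation sigma in S_n is a
   {perm 'I_n}, with sigma_u := sigma u (values shifted to 0..n-1, which does
   not affect any comparison). *)

Definition oriented_graph (n : nat) (E : rel 'I_n) : Prop :=
  forall u v : 'I_n, E u v -> (u != v) && ~~ E v u.

Definition satisfies (n : nat) (E : rel 'I_n) (s : {perm 'I_n}) : bool :=
  [forall u, forall v, E u v ==> (s v < s u)%N].

Definition PG (n : nat) (E : rel 'I_n) : {set {perm 'I_n}} :=
  [set s | satisfies E s].

Definition reach (n : nat) (E : rel 'I_n) (u v : 'I_n) : bool :=
  [exists w, E u w && connect E w v].

Definition leG (n : nat) (E : rel 'I_n) (a b : 'I_n) : bool :=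
  reach E a b || (a == b).

Definition total_order (n : nat) (L : rel 'I_n) : Prop :=
  [/\ reflexive L, antisymmetric L, transitive L & total L].

Definition realizer (n : nat) (R : rel 'I_n) (Ls : seq (rel 'I_n)) : Prop :=
  (forall i, (i < size Ls)%N -> total_order (nth (fun _ _ => true) Ls i)) /\
  (forall a b, R a b = all (fun L : rel 'I_n => L a b) Ls).

(* dim P >= k : every realizer of P has at least k total orders, and some
   realizer exists (so that dim P is well defined). *)
Definition dim_ge (n : nat) (R : rel 'I_n) (k : nat) : Prop :=
  (exists Ls, realizer R Ls) /\ (forall Ls, realizer R Ls -> (k <= size Ls)%N).

Definition incomp (n : nat) (E : rel 'I_n) : {set 'I_n * 'I_n} :=
  [set p : 'I_n * 'I_n | (p.1 < p.2)%N && ~~ reach E p.1 p.2 && ~~ reach E p.2 p.1].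

Definition discordant (n : nat) (s r : {perm 'I_n}) (i j : 'I_n) : bool :=
  ((s i < s j) && (r j < r i)) || ((s j < s i) && (r i < r j)).

Definition dK (n : nat) (s r : {perm 'I_n}) : nat :=
  #|[set p : 'I_n * 'I_n | (p.1 < p.2)%N && discordant s r p.1 p.2]|.

From mathcomp Require Import all_boot all_order all_fingroup.
From mathcomp Require Import zify.
Set Implicit Arguments. Unset Strict Implicit.

(* A permutation s satisfying G orders the vertices by decreasing value of s,
   which is a linear extension of P.  For s, r in P(G) every discordant pair
   is incomparable in P.  If all incomparable pairs were discordant, the two
   linear extensions of s and r would already intersect to P, giving
   dim P <= 2; hence some incomparable pair is concordant. *)

Section LinearExtensions.
Variables (n : nat) (E : rel 'I_n).

Lemma PG_edge (s : {perm 'I_n}) u v : s \in PG E -> E u v -> (s v < s u)%N.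
Proof. by rewrite inE => /forallP/(_ u)/forallP/(_ v)/implyP; apply. Qed.

Lemma PG_reach (s : {perm 'I_n}) u v : s \in PG E -> reach E u v -> (s v < s u)%N.
Proof.
move=> sG /existsP[w /andP[Euw /connectP[p Ep ->]]].
apply: leq_ltn_trans (PG_edge sG Euw).
elim: p w Ep {Euw} => [|x p IHp] w //= /andP[Ewx Ep].
exact: leq_trans (IHp x Ep) (ltnW (PG_edge sG Ewx)).
Qed.

Definition perm_ext (s : {perm 'I_n}) : rel 'I_n := fun a b => (s b <= s a)%N.

Lemma total_order_perm_ext (s : {perm 'I_n}) : total_order (perm_ext s).
Proof.
split=> [a|a b /andP[sba sab]|a b c sba scb|a b].
- exact: leqnn.
- by apply: (@perm_inj _ s); apply/val_inj/eqP; rewrite eqn_leq; apply/andP.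
- exact: leq_trans scb sba.
- exact: leq_total.
Qed.

Lemma leG_perm_ext (s : {perm 'I_n}) a b :
  s \in PG E -> leG E a b -> perm_ext s a b.
Proof.
move=> sG /orP[/(PG_reach sG)/ltnW // | /eqP->]; exact: leqnn.
Qed.

Lemma discordantC (s r : {perm 'I_n}) i j :
  discordant s r i j = discordant s r j i.
Proof. exact: orbC. Qed.

Definition discordant_pairs (s r : {perm 'I_n}) : {set 'I_n * 'I_n} :=
  [set p : 'I_n * 'I_n | (p.1 < p.2)%N && discordant s r p.1 p.2].

Section TwoPermutations.
Variables s r : {perm 'I_n}.
Hypotheses (sG : s \in PG E) (rG : r \in PG E).

Lemma reach_concordant a b : reach E a b -> ~~ discordant s r a b.
Proof.
move=> ab; have := PG_reach sG ab; have := PG_reach rG ab.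
by rewrite /discordant; lia.
Qed.

Lemma discordant_pairs_sub_incomp : discordant_pairs s r \subset incomp E.
Proof.
apply/subsetP => -[i j]; rewrite !inE /= => /andP[-> dij] /=.
apply/andP; split; apply/negP => /reach_concordant; last rewrite discordantC;
  by rewrite dij.
Qed.

Lemma incomparable_discordant a b :
  incomp E \subset discordant_pairs s r ->
  a != b -> ~~ reach E a b -> ~~ reach E b a -> discordant s r a b.
Proof.
move=> /subsetP incomp_disc ab nab nba.
have [lt_ab|lt_ba|/val_inj eq_ab] := ltngtP a b; last by rewrite eq_ab eqxx in ab.
- have /incomp_disc : (a, b) \in incomp E by rewrite inE /= lt_ab nab nba.
  by rewrite inE => /andP[].
- have /incomp_disc : (b, a) \in incomp E by rewrite inE /= lt_ba nab nba.
  by rewrite inE discordantC => /andP[].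
Qed.

Lemma realizer_perm_ext :
  incomp E \subset discordant_pairs s r ->
  realizer (leG E) [:: perm_ext s; perm_ext r].
Proof.
move=> incomp_disc; split=> [[|[|i]] //= _|a b]; try exact: total_order_perm_ext.
rewrite /= andbT; apply/idP/andP => [abG|[sab rab]].
  by split; apply: leG_perm_ext.
have [<-|ab] := eqVneq a b; first by rewrite /leG eqxx orbT.
rewrite /leG (negbTE ab) orbF; apply: contraT => nab.
have nba : ~~ reach E b a.
  by apply/negP => /(PG_reach sG); move: sab; rewrite /perm_ext; lia.
have := incomparable_discordant incomp_disc ab nab nba.
by move: sab rab; rewrite /discordant /perm_ext; lia.
Qed.

End TwoPermutations.
End LinearExtensions.

Theorem mainTheorem10 (n : nat) (E : rel 'I_n) :
  oriented_graph E ->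
  (1 <= #|PG E|)%N ->
  dim_ge (leG E) 3 ->
  forall s r : {perm 'I_n}, s \in PG E -> r \in PG E ->
    (dK s r < #|incomp E|)%N.
Proof.
move=> _ _ [_ dim3] s r sG rG.
have [le_card eq_card] := subset_leqif_card (discordant_pairs_sub_incomp sG rG).
rewrite ltn_neqAle le_card andbT eq_card.
by apply/negP => /(realizer_perm_ext sG rG)/dim3.
Qed.
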